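(* Let $T_0,T_1\subseteq\mathbb{Z}_2^\omega$ be thin sets such that $T_0\cup T_1=\mathbb{Z}_2^\omega$. Then $T_0$ and $T_1$ are disjoint and both are xor-sets.
   Context: $\mathbb{Z}_2^\omega$ is the set of infinite binary sequences indexed by $\omega=\{0,1,2,\dots\}$. A set $T\subseteq\mathbb{Z}_2^\omega$ is thin if for every $n\in\omega$ the map $x\mapsto x|_{\omega\setminus\{n\}}$ is injective on $T$. For $x\in\mathbb{Z}_2^\omega$ and $n\in\omega$, $x^{\#n}$ is the sequence obtained from $x$ by flipping the $n$-th coordinate ($x^{\#n}(k)=x(k)$ for $k\ne n$, $x^{\#n}(n)=1-x(n)$). A set $\mathcal{X}\subseteq\mathbb{Z}_2^\omega$ is a xor-set if for every $n\in\omega$ and $x\in\mathbb{Z}_2^\omega$: $x\in\mathcal{X}\iff x^{\#n}\notin\mathcal{X}$. *)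

From Stdlib Require Import Arith.

Definition seq2 := nat -> bool.

Definition thin (T : seq2 -> Prop) : Prop :=
  forall (n : nat) (x y : seq2), T x -> T y ->
    (forall k, k <> n -> x k = y k) -> x = y.

Definition flip (x : seq2) (n : nat) : seq2 :=
  fun k => if Nat.eqb k n then negb (x k) else x k.

Definition xor_set (X : seq2 -> Prop) : Prop :=
  forall (n : nat) (x : seq2), X x <-> ~ X (flip x n).

(* Flipping one coordinate of x keeps all other coordinates, so a thin set
   never contains both x and x^{#n}.  Hence a point of T0 ∩ T1 would leave
   x^{#0} uncovered, and a point outside T0 lies in T1, which pushes its
   neighbour x^{#n} out of T1 and therefore into T0. *)
From Stdlib Require Import Arith.

Lemma flip_at (x : seq2) (n : nat) : flip x n n = negb (x n).
Proof. unfold flip. now rewrite Nat.eqb_refl. Qed.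

Lemma flip_off (x : seq2) (n k : nat) : k <> n -> flip x n k = x k.
Proof. intros Hk. unfold flip. now rewrite (proj2 (Nat.eqb_neq k n) Hk). Qed.

Lemma flip_neq (x : seq2) (n : nat) : flip x n <> x.
Proof.
  intros E. pose proof (f_equal (fun y => y n) E) as En. simpl in En.
  rewrite flip_at in En. destruct (x n); discriminate.
Qed.

Lemma thin_flip (T : seq2 -> Prop) (n : nat) (x : seq2) :
  thin T -> T x -> ~ T (flip x n).
Proof.
  intros Ht Hx Hf. apply (flip_neq x n).
  apply (Ht n); [exact Hf | exact Hx | apply flip_off].
Qed.

Lemma thin_cover_disjoint (T0 T1 : seq2 -> Prop) :
  thin T0 -> thin T1 -> (forall x, T0 x \/ T1 x) ->
  forall x, ~ (T0 x /\ T1 x).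
Proof.
  intros H0 H1 Hcov x [Hx0 Hx1].
  destruct (Hcov (flip x 0)) as [Hf | Hf].
  - exact (thin_flip T0 0 x H0 Hx0 Hf).
  - exact (thin_flip T1 0 x H1 Hx1 Hf).
Qed.

Lemma thin_cover_xor_set (T0 T1 : seq2 -> Prop) :
  thin T0 -> thin T1 -> (forall x, T0 x \/ T1 x) -> xor_set T0.
Proof.
  intros H0 H1 Hcov n x. split.
  - apply thin_flip, H0.
  - intros Hf. destruct (Hcov x) as [Hx0 | Hx1]; [exact Hx0 |].
    destruct (Hcov (flip x n)) as [Hf0 | Hf1]; [contradiction |].
    exfalso. exact (thin_flip T1 n x H1 Hx1 Hf1).
Qed.

Theorem proposition15 (T0 T1 : seq2 -> Prop) :
  thin T0 -> thin T1 -> (forall x : seq2, T0 x \/ T1 x) ->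
  (forall x : seq2, ~ (T0 x /\ T1 x)) /\ xor_set T0 /\ xor_set T1.
Proof.
  intros H0 H1 Hcov.
  assert (Hcov' : forall x, T1 x \/ T0 x) by (intros x; apply or_comm, Hcov).
  split; [| split].
  - exact (thin_cover_disjoint T0 T1 H0 H1 Hcov).
  - exact (thin_cover_xor_set T0 T1 H0 H1 Hcov).
  - exact (thin_cover_xor_set T1 T0 H1 H0 Hcov').
Qed.
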